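(* Let $K, L \subset \mathbb{R}^m$ be proper cones. Suppose that $K$ is an $L$-isotone projection set, and that at least one of the sets $\operatorname{int}(K^* )\cap L$ or $\operatorname{int}(K^* )\cap L^*$ is nonempty. Then $K$ is subdual and $K\subset L\subset K^*$.
   Context: $\mathbb{R}^m$ carries the standard inner product $\langle\cdot,\cdot\rangle$ and Euclidean norm. A convex cone $K$ is a nonempty set with $K+K\subset K$ and $tK\subset K$ for all $t\ge 0$; it is pointed if $K\cap(-K)=\{0\}$, generating if $K-K=\mathbb{R}^m$; a proper cone is a generating, closed, convex, pointed cone. The dual of $K$ is $K^*=\{y:\langle x,y\rangle\ge 0\ \forall x\in K\}$. $K$ is subdual if $K\subset K^*$. For a cone $L$, $x\le_L y$ means $y-x\in L$. For a nonempty closed convex set $D$, $P_D$ denotes the metric (nearest-point) projection onto $D$. $D$ is called an $L$-isotone projection set ($L$-isotone) if $x\le_L y$ implies $P_Dx\le_L P_Dy$ for all $x,y\in\mathbb{R}^m$. *)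

(* R^m is modelled as 'rV[R]_m for
   R : realType, with its library topology (product/max-norm topology,
   which coincides with the Euclidean one). *)
From HB Require Import structures.
From mathcomp Require Import all_boot all_order all_algebra.
From mathcomp Require Import all_classical all_reals all_analysis.
Set Implicit Arguments. Unset Strict Implicit. Unset Printing Implicit Defensive.
Import Order.TTheory GRing.Theory Num.Theory.
Import numFieldNormedType.Exports.
Local Open Scope classical_set_scope.
Local Open Scope ring_scope.

Section Cones.
Variables (R : realType) (m : nat).
Notation V := 'rV[R]_m.

Definition dotp (x y : V) : R := \sum_(i < m) x ord0 i * y ord0 i.

Definition convex_cone (K : set V) : Prop :=
  K !=set0 /\
  (forall x y, K x -> K y -> K (x + y)) /\
  (forall (t : R) x, 0 <= t -> K x -> K (t *: x)).

Definition pointed_cone (K : set V) : Prop :=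
  K `&` [set x | K (- x)] = [set 0].

Definition generating_cone (K : set V) : Prop :=
  forall z : V, exists x y, K x /\ K y /\ z = x - y.

Definition proper_cone (K : set V) : Prop :=
  convex_cone K /\ generating_cone K /\ closed K /\ pointed_cone K.

Definition dual_cone (K : set V) : set V :=
  [set y | forall x, K x -> 0 <= dotp x y].

Definition subdual (K : set V) : Prop := K `<=` dual_cone K.

Definition is_metric_proj (D : set V) (x p : V) : Prop :=
  D p /\ forall y, D y -> dotp (x - p) (x - p) <= dotp (x - y) (x - y).

Definition isotone_proj_set (L D : set V) : Prop :=
  forall x y px py, L (y - x) ->
    is_metric_proj D x px -> is_metric_proj D y py -> L (py - px).

End Cones.

From HB Require Import structures.
From mathcomp Require Import all_boot all_order all_algebra.
From mathcomp Require Import all_classical all_reals all_analysis.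
From mathcomp Require Import ring lra.
Set Implicit Arguments. Unset Strict Implicit. Unset Printing Implicit Defensive.
Import Order.TTheory GRing.Theory Num.Theory.
Import numFieldNormedType.Exports.
Local Open Scope classical_set_scope.
Local Open Scope ring_scope.

(* Write P for the projection onto K. Isotonicity is only ever applied to
   pairs whose projections are known: P k = k on K, and P z = 0 exactly
   when -z lies in K^*. If L <= K^*, a decomposition k = l1 - l2 over L gives
   -l2 <=_L k, hence 0 = P(-l2) <=_L P k = k, so K <= L. If K <= L, then for
   l in L we get P(-l) <=_L P 0 = 0 while P(-l) is in K <= L, so P(-l) = 0
   by pointedness and l lies in K^*. A point w of int K^* in L makes k - w/s
   project to 0 for small s > 0, which gives K <= L; a point w of int K^* in
   L^* forces <P(-l), w> = 0, hence P(-l) = 0, which gives L <= K^*. *)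

Section InnerProduct.
Variables (R : realType) (m : nat).
Notation V := 'rV[R]_m.
Implicit Types x y z : V.

Lemma dotpC x y : dotp x y = dotp y x.
Proof. by apply: eq_bigr => i _; rewrite mulrC. Qed.

Lemma dotpDl x y z : dotp (x + y) z = dotp x z + dotp y z.
Proof. by rewrite /dotp -big_split; apply: eq_bigr => i _; rewrite !mxE mulrDl. Qed.

Lemma dotpNl x z : dotp (- x) z = - dotp x z.
Proof. by rewrite /dotp -sumrN; apply: eq_bigr => i _; rewrite !mxE mulNr. Qed.

Lemma dotpZl (a : R) x z : dotp (a *: x) z = a * dotp x z.
Proof. by rewrite /dotp mulr_sumr; apply: eq_bigr => i _; rewrite !mxE mulrA. Qed.

Lemma dotpBl x y z : dotp (x - y) z = dotp x z - dotp y z.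
Proof. by rewrite dotpDl dotpNl. Qed.

Lemma dotpDr x y z : dotp z (x + y) = dotp z x + dotp z y.
Proof. by rewrite dotpC dotpDl !(dotpC z). Qed.

Lemma dotpNr x z : dotp z (- x) = - dotp z x.
Proof. by rewrite dotpC dotpNl dotpC. Qed.

Lemma dotpZr (a : R) x z : dotp z (a *: x) = a * dotp z x.
Proof. by rewrite dotpC dotpZl dotpC. Qed.

Lemma dotpBr x y z : dotp z (x - y) = dotp z x - dotp z y.
Proof. by rewrite dotpDr dotpNr. Qed.

Lemma dotp0l z : dotp 0 z = 0.
Proof. by rewrite -(scale0r 0) dotpZl mul0r. Qed.

Lemma dotpp_ge0 x : 0 <= dotp x x.
Proof. by apply: sumr_ge0 => i _; rewrite -expr2 sqr_ge0. Qed.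

Lemma dotpp_eq0 x : dotp x x = 0 -> x = 0.
Proof.
move=> /eqP; rewrite psumr_eq0 => [/allP x0|i _]; last by rewrite -expr2 sqr_ge0.
apply/rowP => i; rewrite mxE.
by have /(_ (mem_index_enum i)) := x0 i; rewrite /= mulf_eq0 orbb => /eqP.
Qed.

Lemma dotpBB x y :
  dotp (x - y) (x - y) = dotp x x - 2 * dotp x y + dotp y y.
Proof. by rewrite dotpBl !dotpBr (dotpC y x); ring. Qed.

Lemma coord_sqr_le_dotpp x i : x ord0 i * x ord0 i <= dotp x x.
Proof.
rewrite /dotp (bigD1 i) //= lerDl; apply: sumr_ge0 => j _.
by rewrite -expr2 sqr_ge0.
Qed.

Lemma sqdist_continuous x : continuous (fun y => dotp (x - y) (x - y)).
Proof.
have coordB i : continuous (fun y : V => (x - y) ord0 i).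
  have -> : (fun y : V => (x - y) ord0 i) = (fun y : V => x ord0 i - y ord0 i).
    by apply: funext => y; rewrite !mxE.
  by move=> y; apply: continuousB; [exact: cst_continuous|exact: coord_continuous].
apply: continuous_big => [|i _ y]; first exact: add_continuous.
by apply: continuousM; exact: coordB.
Qed.

End InnerProduct.

Section MetricProjection.
Variables (R : realType) (m : nat).
Notation V := 'rV[R]_m.
Implicit Types (D K : set V) (x y z : V).

(* Minimise the distance to x over D intersected with a box around x large
   enough that every point of D outside it is farther from x than d is. *)
Lemma metric_proj_exists D d x : closed D -> D d -> exists p, is_metric_proj D x p.
Proof.
move=> Dcl Dd; set T := dotp (x - d) (x - d).
have T0 : 0 <= T by exact: dotpp_ge0.
pose I i := `[x ord0 i - (T + 1), x ord0 i + (T + 1)]%classic.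
pose B := [set v : V | forall i, I i (v ord0 i)].
have BDcompact : compact (B `&` D).
  apply: compact_closedI => //.
  by apply: (@rV_compact _ _ I) => i; exact: segment_compact.
have Bd : B d.
  move=> i; rewrite /I /= in_itv /=.
  have := coord_sqr_le_dotpp (x - d) i; rewrite -/T !mxE => dTi.
  by apply/andP; split; nra.
have [p] := EVT_min_rV (ex_intro _ d (conj Bd Dd)) BDcompact
  (continuous_subspaceT (@sqdist_continuous _ _ x)).
rewrite inE => -[_ Dp] pmin.
have pT : dotp (x - p) (x - p) <= T by apply: pmin; rewrite inE.
exists p; split=> // y Dy.
have [By|/existsNP [i /= yIi]] := pselect (B y); first by apply: pmin; rewrite inE.
have := coord_sqr_le_dotpp (x - y) i; rewrite !mxE => yTi.
apply: (le_trans pT); move: yIi; rewrite /I /= in_itv /= => /negP.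
by rewrite negb_and -!ltNge => /orP[] yi; nra.
Qed.

Lemma metric_proj_id D x : D x -> is_metric_proj D x x.
Proof. by move=> Dx; split=> // y _; rewrite subrr dotp0l; exact: dotpp_ge0. Qed.

Lemma convex_cone0 K : convex_cone K -> K 0.
Proof. by move=> [[k Kk] [_ Kscale]]; rewrite -(scale0r k); exact: Kscale. Qed.

Lemma pointed_coneP K x : pointed_cone K -> K x -> K (- x) -> x = 0.
Proof. by rewrite /pointed_cone => Kpt Kx KNx; have : [set 0] x by rewrite -Kpt. Qed.

(* Variational inequality; the competitor is p + t y with t = c / (|y|^2 + 1). *)
Lemma metric_proj_cone_dotp_le0 K x p y : convex_cone K ->
  is_metric_proj K x p -> K y -> dotp (x - p) y <= 0.
Proof.
move=> [_ [Kadd Kscale]] [Kp pmin] Ky; rewrite leNgt; apply/negP => c0.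
set c := dotp (x - p) y; set d := dotp y y.
have d0 : 0 <= d by exact: dotpp_ge0.
set t := c / (d + 1).
have t0 : 0 < t by rewrite divr_gt0 // ltr_wpDl.
have td : t * (d + 1) = c by rewrite /t mulfVK // gt_eqF // ltr_wpDl.
have := pmin _ (Kadd _ _ Kp (Kscale _ _ (ltW t0) Ky)).
rewrite opprD addrA (dotpBB (x - p)) !dotpZr !dotpZl -/c -/d; nra.
Qed.

Lemma metric_proj_eq0 K z : K 0 -> dual_cone K (- z) -> is_metric_proj K z 0.
Proof.
move=> K0 Nzdual; split=> // y Ky; rewrite subr0 dotpBB.
have := Nzdual y Ky; rewrite dotpNr (dotpC y z).
by have := dotpp_ge0 y; lra.
Qed.

Lemma metric_proj_eq0_dual K z : convex_cone K ->
  is_metric_proj K z 0 -> dual_cone K (- z).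
Proof.
move=> Kcone z0 y Ky; rewrite dotpNr dotpC oppr_ge0.
by have := metric_proj_cone_dotp_le0 Kcone z0 Ky; rewrite subr0.
Qed.

End MetricProjection.

Section InteriorDual.
Variables (R : realType) (m : nat).
Notation V := 'rV[R]_m.
Implicit Types (K : set V) (w z : V).

Lemma interior_dual_cone_shift K w : interior (dual_cone K) w ->
  forall z, exists2 s : R, 0 < s & dual_cone K (w + s *: z).
Proof.
rewrite /interior /= => /nbhs_ballP [e e0 eball] z.
have z1 : 0 < `|z| + 1 by rewrite ltr_wpDl.
set s := e / (2 * (`|z| + 1)).
have s0 : 0 < s by rewrite divr_gt0 // mulr_gt0.
have se : s * (2 * (`|z| + 1)) = e by rewrite /s mulfVK // gt_eqF // mulr_gt0.
exists s => //; apply: eball.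
rewrite -ball_normE /= opprD addrA subrr sub0r normrN normrZ gtr0_norm //.
by have := normr_ge0 z; nra.
Qed.

Lemma dual_coneZ K (a : R) y : 0 <= a -> dual_cone K y -> dual_cone K (a *: y).
Proof. by move=> a0 Ky x Kx; rewrite dotpZr mulr_ge0 // Ky. Qed.

(* Testing against w - s a, which stays in K^*, gives -s |a|^2 >= 0. *)
Lemma interior_dual_cone_dotp_eq0 K w a : interior (dual_cone K) w ->
  K a -> dotp a w = 0 -> a = 0.
Proof.
move=> wint Ka aw0; have [s s0 ws] := interior_dual_cone_shift wint (- a).
have := ws a Ka; rewrite dotpDr dotpZr dotpNr aw0 add0r.
by have := dotpp_ge0 a => a0 sa; apply: dotpp_eq0; nra.
Qed.

End InteriorDual.

Section IsotoneProjectionCone.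
Variables (R : realType) (m : nat) (K L : set 'rV[R]_m).
Hypotheses (Kcone : convex_cone K) (Kclosed : closed K).
Hypothesis Kiso : isotone_proj_set L K.

Let K0 : K 0 := convex_cone0 Kcone.

Lemma dual_sub_isotone_cone : generating_cone L ->
  L `<=` dual_cone K -> K `<=` L.
Proof.
move=> Lgen LK k Kk; have [l1 [l2 [Ll1 [Ll2 kE]]]] := Lgen k.
rewrite -[k]subr0; apply: (Kiso (x := - l2) (y := k)).
- by rewrite opprK kE subrK.
- by apply: metric_proj_eq0 => //; rewrite opprK; exact: LK.
- exact: metric_proj_id.
Qed.

Lemma metric_proj_opp_isotone l p : L l -> is_metric_proj K (- l) p -> L (- p).
Proof.
move=> Ll lp; rewrite -sub0r; apply: (Kiso _ lp (metric_proj_id K0)).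
by rewrite sub0r opprK.
Qed.

Lemma isotone_cone_sub_dual : pointed_cone L -> K `<=` L -> L `<=` dual_cone K.
Proof.
move=> Lpt KL l Ll; have [p lp] := metric_proj_exists (- l) Kclosed K0.
have p0 : p = 0.
  by apply: (pointed_coneP Lpt); [apply: KL; case: lp|exact: metric_proj_opp_isotone lp].
by rewrite -[l]opprK; apply: metric_proj_eq0_dual => //; rewrite -p0.
Qed.

Lemma interior_dual_meet_sub w : convex_cone L ->
  interior (dual_cone K) w -> L w -> K `<=` L.
Proof.
move=> [_ [_ Lscale]] wint Lw k Kk.
have [s s0 ws] := interior_dual_cone_shift wint (- k).
have s'0 : 0 < s^-1 by rewrite invr_gt0.
have wsk : dual_cone K (s^-1 *: w - k).
  have := dual_coneZ (ltW s'0) ws.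
  by rewrite scalerDr scalerA mulVf ?gt_eqF // scale1r.
rewrite -[k]subr0; apply: (Kiso (x := k - s^-1 *: w) (y := k)).
- by rewrite opprB addrC subrK; exact: Lscale (ltW s'0) Lw.
- by apply: metric_proj_eq0; rewrite ?opprB.
- exact: metric_proj_id.
Qed.

Lemma interior_dual_meet_dual_sub w :
  interior (dual_cone K) w -> dual_cone L w -> L `<=` dual_cone K.
Proof.
move=> wint Lw l Ll; have [p lp] := metric_proj_exists (- l) Kclosed K0.
have Kp : K p by case: lp.
have p0 : p = 0.
  apply: (interior_dual_cone_dotp_eq0 wint Kp); apply/eqP; rewrite eq_le.
  have := Lw _ (metric_proj_opp_isotone Ll lp); rewrite dotpNl oppr_ge0 => ->.
  exact: interior_subset wint p Kp.
by rewrite -[l]opprK; apply: metric_proj_eq0_dual => //; rewrite -p0.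
Qed.

End IsotoneProjectionCone.

Theorem theorem4 (R : realType) (m : nat) (K L : set 'rV[R]_m) :
  proper_cone K -> proper_cone L ->
  isotone_proj_set L K ->
  ((interior (dual_cone K) `&` L) !=set0 \/
   (interior (dual_cone K) `&` dual_cone L) !=set0) ->
  subdual K /\ K `<=` L /\ L `<=` dual_cone K.
Proof.
move=> [Kcone [_ [Kclosed _]]] [Lcone [Lgen [_ Lpt]]] Kiso Hw.
have [KL LK] : K `<=` L /\ L `<=` dual_cone K.
  case: Hw => [[w [wint Lw]]|[w [wint Lw]]].
  - have KL := interior_dual_meet_sub Kcone Kiso Lcone wint Lw.
    by split; last exact: isotone_cone_sub_dual Kcone Kclosed Kiso Lpt KL.
  - have LK := interior_dual_meet_dual_sub Kcone Kclosed Kiso wint Lw.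
    by split; first exact: dual_sub_isotone_cone Kcone Kiso Lgen LK.
by split=> // k Kk; apply: LK; apply: KL.
Qed.
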